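(* Let $\Sigma$ be a finite alphabet, let $u,v\in\Sigma^\star$, $i_1,i_2\in[1,|u|]$, $j_1,j_2\in[1,|v|]$ and $n\in\mathbb{N}$. The following are equivalent: (i) (a) $R_n(u)=R_n(v)$; (b) for all $r\in R_n^\star(u)$ and $r'\in R_{n-1}^\star(u)$, $\operatorname{ord}(r(u),r'(u))=\operatorname{ord}(r(v),r'(v))$; (c) $(u,i_1,i_2)\equiv^2_0(v,j_1,j_2)$, i.e. $u_{i_1}=v_{j_1}$, $u_{i_2}=v_{j_2}$ and $\operatorname{ord}(i_1,i_2)=\operatorname{ord}(j_1,j_2)$; (d) for all $r\in R_n^\star(u)$, $\operatorname{ord}(i_1,r(u))=\operatorname{ord}(j_1,r(v))$ and $\operatorname{ord}(i_2,r(u))=\operatorname{ord}(j_2,r(v))$; (ii) $(u,i_1,i_2)\equiv^2_n(v,j_1,j_2)$.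
   Context: Words are finite structures: a word $w=w_1\cdots w_\ell$ has universe $\{1,\dots,\ell\}$, unary predicates $Q_a$ ($a\in\Sigma$) with $Q_a=\{i:w_i=a\}$, and the order $<$. $\mathrm{FO}^2_n[<]$ is first-order logic over this signature (atomic formulas $Q_a(z)$, $z=z'$, $z<z'$) using only the variables $x,y$, with quantifier depth at most $n$. $(w,i,j)$ denotes $w$ with $x$ interpreted as $i$ and $y$ as $j$; $(u,i_1,i_2)\equiv^2_n(v,j_1,j_2)$ means the two structures satisfy the same $\mathrm{FO}^2_n[<]$ formulas with free variables among $x,y$. Boundary positions: for $a\in\Sigma$, $\triangleright_a(w)=\min\{i: w_i=a\}$, $\triangleleft_a(w)=\max\{i: w_i=a\}$, $\triangleright_a(w,q)=\min\{i\in[q+1,|w|]:w_i=a\}$, $\triangleleft_a(w,q)=\max\{i\in[1,q-1]:w_i=a\}$ (undefined if the set is empty). An $n$-ranker ($n\ge1$) is a sequence $r=(p_1,\dots,p_n)$ of boundary positions with $r(w)=p_1(w)$ if $n=1$, undefined if $(p_1,\dots,p_{n-1})(w)$ is undefined, and $p_n(w,(p_1,\dots,p_{n-1})(w))$ otherwise. $R_n(w)$ is the set of $n$-rankers defined over $w$; $R_n^\star(w)=\bigcup_{i\in[1,n]}R_i(w)$ (empty for $n=0$). $\operatorname{ord}(i,j)\in\{<,=,>\}$ is the order type of $i$ and $j$. *)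

From mathcomp Require Import all_boot.
Set Implicit Arguments. Unset Strict Implicit. Unset Printing Implicit Defensive.

Section Words.
Variable Sigma : finType.

(* Words are sequences; positions are 1-based: w_i = nth (i-1). *)
Definition letter (w : seq Sigma) (i : nat) : option Sigma := onth w i.-1.

Inductive var := VX | VY.

Inductive fo2 :=
| FQ : Sigma -> var -> fo2
| FEq : var -> var -> fo2
| FLt : var -> var -> fo2
| FTrue : fo2
| FFalse : fo2
| FNot : fo2 -> fo2
| FAnd : fo2 -> fo2 -> fo2
| FOr : fo2 -> fo2 -> fo2
| FImp : fo2 -> fo2 -> fo2
| FEx : var -> fo2 -> fo2
| FAll : var -> fo2 -> fo2.

Fixpoint qdepth (f : fo2) : nat :=
  match f with
  | FQ _ _ | FEq _ _ | FLt _ _ | FTrue | FFalse => 0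
  | FNot g => qdepth g
  | FAnd g h | FOr g h | FImp g h => maxn (qdepth g) (qdepth h)
  | FEx _ g | FAll _ g => (qdepth g).+1
  end.

Definition val (i j : nat) (z : var) : nat := if z is VX then i else j.

Fixpoint sat (w : seq Sigma) (i j : nat) (f : fo2) : Prop :=
  match f with
  | FQ a z => letter w (val i j z) = Some a
  | FEq z z' => val i j z = val i j z'
  | FLt z z' => val i j z < val i j z'
  | FTrue => True
  | FFalse => False
  | FNot g => ~ sat w i j g
  | FAnd g h => sat w i j g /\ sat w i j h
  | FOr g h => sat w i j g \/ sat w i j h
  | FImp g h => sat w i j g -> sat w i j h
  | FEx VX g => exists k, 1 <= k <= size w /\ sat w k j g
  | FEx VY g => exists k, 1 <= k <= size w /\ sat w i k g
  | FAll VX g => forall k, 1 <= k <= size w -> sat w k j g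
  | FAll VY g => forall k, 1 <= k <= size w -> sat w i k g
  end.

Definition fo2equiv (n : nat) (u : seq Sigma) (i1 i2 : nat)
  (v : seq Sigma) (j1 j2 : nat) : Prop :=
  forall f, qdepth f <= n -> (sat u i1 i2 f <-> sat v j1 j2 f).

(* BFst a = |>_a (leftmost from a position), BLst a = <|_a (rightmost) *)
Inductive bpos := BFst of Sigma | BLst of Sigma.

Definition is_a (w : seq Sigma) (a : Sigma) (i : nat) : bool :=
  letter w i == Some a.

Definition omin (s : seq nat) : option nat := ohead s.
Definition omax (s : seq nat) : option nat := ohead (rev s).

Definition bp_abs (p : bpos) (w : seq Sigma) : option nat :=
  match p with
  | BFst a => omin [seq i <- iota 1 (size w) | is_a w a i]
  | BLst a => omax [seq i <- iota 1 (size w) | is_a w a i]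
  end.

Definition bp_rel (p : bpos) (w : seq Sigma) (q : nat) : option nat :=
  match p with
  | BFst a => omin [seq i <- iota q.+1 (size w - q) | is_a w a i]
  | BLst a => omax [seq i <- iota 1 q.-1 | is_a w a i]
  end.

Fixpoint rk_from (w : seq Sigma) (q : nat) (r : seq bpos) : option nat :=
  match r with
  | [::] => Some q
  | p :: r' => obind (fun q' => rk_from w q' r') (bp_rel p w q)
  end.

Definition rk_eval (w : seq Sigma) (r : seq bpos) : option nat :=
  match r with
  | [::] => None
  | p :: r' => obind (fun q => rk_from w q r') (bp_abs p w)
  end.

Definition rk_defined (w : seq Sigma) (r : seq bpos) : Prop := rk_eval w r <> None.

Definition inR (n : nat) (w : seq Sigma) (r : seq bpos) : Prop :=
  size r = n /\ 1 <= n /\ rk_defined w r.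

Definition inRstar (n : nat) (w : seq Sigma) (r : seq bpos) : Prop :=
  1 <= size r <= n /\ rk_defined w r.

Definition oord (a b : option nat) : option comparison :=
  match a, b with
  | Some i, Some j => Some (Nat.compare i j)
  | _, _ => None
  end.

Definition ord (i j : nat) : comparison := Nat.compare i j.

End Words.

From Pilot Require Import Defs.
From mathcomp Require Import all_boot zify.
From Stdlib Require Import Classical.
Set Implicit Arguments. Unset Strict Implicit. Unset Printing Implicit Defensive.

(* By the Ehrenfeucht-Fraisse theorem for two pebbles, [==^2_n] is equivalence
   under the n-round two-pebble game, Hintikka formulas giving the converse.

   The game locates boundary steps: Spoiler pebbles the value of a step p(w, q),
   and Duplicator must answer with the same letter on the same side of the
   anchor q, which bounds the step in the other word.  By induction on length,
   the value of a ranker of length at most m lies on the same side of the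
   pebbles in any two positions related by m rounds; this gives (a)-(d).

   Conversely, (b)-(d), with definedness transferred by (a), are an invariant
   Duplicator can maintain: a Spoiler move z other than the fixed pebble x lies
   strictly inside a gap between x and the values of the rankers of length at
   most n; the first (or last) occurrence of the letter of z next to an end of
   that gap is the value of a ranker of length at most n+1 lying in the same
   gap, and Duplicator answers with the value of that ranker in the other word. *)

Lemma ordE i j : ord i j = if i < j then Lt else if i == j then Eq else Gt.
Proof. by rewrite /ord; elim: i j => [|i IH] [|j] //=; rewrite IH ltnS eqSS. Qed.

Lemma ord_refl i : ord i i = Eq.
Proof. by rewrite ordE ltnn eqxx. Qed.

Lemma ord_sym i j : ord j i = CompOpp (ord i j).
Proof. by rewrite !ordE; case: ltngtP. Qed.

Lemma eq_ord_sym a b c d : ord a b = ord c d -> ord b a = ord d c.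
Proof. by move=> E; rewrite ord_sym E -ord_sym. Qed.

Lemma eq_ord_ltn a b c d : ord a b = ord c d -> (a < b) = (c < d).
Proof. by rewrite !ordE; case: (ltngtP a b); case: (ltngtP c d). Qed.

Lemma eq_ord_eq a b c d : ord a b = ord c d -> (a == b) = (c == d).
Proof. by rewrite !ordE; case: (ltngtP a b); case: (ltngtP c d). Qed.

Lemma eq_ord_gtn a b c d : ord a b = ord c d -> (b < a) = (d < c).
Proof. by move/eq_ord_sym/eq_ord_ltn. Qed.

Lemma ord_in_gap L R a b p :
  L < a < R -> L < b < R -> (p <= L) || (R <= p) -> ord a p = ord b p.
Proof.
by move=> ? ? /orP ?; rewrite !ordE; case: (ltngtP a p); case: (ltngtP b p) => //; lia.
Qed.

Lemma ord_squeeze q t p q' t' p' :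
  q' <= t' -> q <= t -> ord q p = ord t' p' -> ord q' p' = ord t p -> ord q p = ord q' p'.
Proof.
by rewrite !ordE; case: (ltngtP q p); case: (ltngtP t' p');
  case: (ltngtP q' p'); case: (ltngtP t p) => //; lia.
Qed.

Lemma ord_squeeze_rev q t p q' t' p' :
  t' <= q' -> t <= q -> ord q p = ord t' p' -> ord q' p' = ord t p -> ord q p = ord q' p'.
Proof.
by rewrite !ordE; case: (ltngtP q p); case: (ltngtP t' p');
  case: (ltngtP q' p'); case: (ltngtP t p) => //; lia.
Qed.

Lemma oord_some i j : oord (Some i) (Some j) = Some (ord i j).
Proof. by []. Qed.

Section Extremal.
Variable P : nat -> Prop.

Lemma exists_greatest_below k z : k <= z -> P k ->
  exists L, [/\ L <= z, P L & forall p, L < p <= z -> ~ P p].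
Proof.
move=> le_kz Pk; elim: z le_kz => [|z IH] le_kz.
  by exists k; split=> // p; lia.
case: (classic (P z.+1)) => [Pz|nPz]; first by exists z.+1; split=> // p; lia.
have le_kz' : k <= z.
  by case: (ltngtP k z.+1) => [||Ek]; [lia | lia | rewrite Ek in Pk].
have [L [le_Lz PL maxL]] := IH le_kz'.
exists L; split=> [|//|p ?]; first lia.
by case: (ltngtP p z.+1) => [?|?|->] //; [apply: maxL | ]; lia.
Qed.

Lemma exists_least_above k z : z <= k -> P k ->
  exists R, [/\ z <= R, P R & forall p, z <= p < R -> ~ P p].
Proof.
move=> le_zk; have [d ->] : exists d, k = z + d by exists (k - z); lia.
elim: d z {le_zk} => [|d IH] z Pd.
  by exists z; rewrite addn0 in Pd; split=> // p; lia.
case: (classic (P z)) => [Pz|nPz]; first by exists z; split=> // p; lia.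
move: Pd; rewrite -addSnnS => /IH [R [le_zR PR minR]].
exists R; split=> [|//|p ?]; first lia.
by case: (ltngtP p z) => [?|?|->] //; [ | apply: minR]; lia.
Qed.

End Extremal.

(** * Boundary positions and rankers *)

Section FilterIota.
Variable P : pred nat.

Lemma omin_filter_iota a n k : omin [seq i <- iota a n | P i] = Some k ->
  [/\ a <= k < a + n, P k & forall j, a <= j < k -> ~~ P j].
Proof.
elim: n a => [|n IH] a //=; case: ifP => [Pa [<-]|nPa /IH [rng_k Pk mink]].
  by split=> [||j ?]; [lia | done | lia].
split=> [||j rng_j]; [lia | done | ].
by case: (ltngtP a j) => [?||<-]; [apply: mink; lia | lia | rewrite nPa].
Qed.

Lemma omin_filter_iota_some a n k : a <= k < a + n -> P k ->
  exists k0, omin [seq i <- iota a n | P i] = Some k0.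
Proof.
elim: n a => [|n IH] a /= rng_k Pk; first lia.
case: ifP => Pa; first by eexists.
by case: (ltngtP a k) => [?|?|ak]; [apply: IH => //; lia | lia | rewrite ak Pk in Pa].
Qed.

Lemma omax_filter_iota a n k : omax [seq i <- iota a n | P i] = Some k ->
  [/\ a <= k < a + n, P k & forall j, k < j < a + n -> ~~ P j].
Proof.
elim: n => [|n IH] //; rewrite /omax -addn1 iotaD filter_cat rev_cat /=.
case: ifP => [Pa [<-]|nPa /IH [rng_k Pk maxk]]; first by split=> [||j ?]; [lia | done | lia].
split=> [||j rng_j]; [lia | done | ].
by case: (ltngtP j (a + n)) => [?||->]; [apply: maxk; lia | lia | rewrite nPa].
Qed.

Lemma omax_filter_iota_some a n k : a <= k < a + n -> P k ->
  exists k0, omax [seq i <- iota a n | P i] = Some k0.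
Proof.
elim: n => [|n IH] rng_k Pk; first lia.
rewrite /omax -addn1 iotaD filter_cat rev_cat /=.
case: ifP => Pa; first by eexists.
by case: (ltngtP k (a + n)) => [?|?|ak]; [apply: IH => //; lia | lia | rewrite -ak Pk in Pa].
Qed.

End FilterIota.

Section Rankers.
Variable Sigma : finType.
Implicit Types (w : seq Sigma) (a : Sigma) (b : bpos Sigma) (r s : seq (bpos Sigma)).

Lemma letter_le_size w k a : 1 <= k -> letter w k = Some a -> k <= size w.
Proof.
by rewrite /letter => k_gt0 Ek; have := onthTE w k.-1; rewrite Ek; case: ltnP => //= *; lia.
Qed.

Lemma letter_exists w k : 1 <= k <= size w -> exists a, letter w k = Some a.
Proof.
rewrite /letter => rng_k; case Ek: (onth w k.-1) => [a|]; first by exists a.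
by have := onthTE w k.-1; rewrite Ek; case: ltnP => //= *; lia.
Qed.

Definition bpos_letter b := match b with BFst a | BLst a => a end.

Lemma bp_rel_fst_spec w a q k : bp_rel (BFst a) w q = Some k ->
  [/\ q < k, letter w k = Some a & forall j, q < j < k -> letter w j <> Some a].
Proof.
case/omin_filter_iota => rng_k /eqP wk mink; split=> [||j rng_j]; [lia | done |].
by apply/eqP/mink; lia.
Qed.

Lemma bp_rel_lst_spec w a q k : bp_rel (BLst a) w q = Some k ->
  [/\ k < q, letter w k = Some a & forall j, k < j < q -> letter w j <> Some a].
Proof.
case/omax_filter_iota => rng_k /eqP wk maxk; split=> [||j rng_j]; [lia | done |].
by apply/eqP/maxk; lia.
Qed.

Lemma bp_rel_range b w q k : bp_rel b w q = Some k ->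
  1 <= k <= size w /\ letter w k = Some (bpos_letter b).
Proof.
case: b => a /=.
  by case/omin_filter_iota => rng_k /eqP wk _; split=> //; lia.
by case/omax_filter_iota => rng_k /eqP wk _; split=> //; apply/andP; split;
  [lia | apply: letter_le_size wk; lia].
Qed.

Lemma bp_rel_fst_some w a q k : q < k <= size w -> letter w k = Some a ->
  exists k0, bp_rel (BFst a) w q = Some k0.
Proof. by move=> rng_k wk; apply: (@omin_filter_iota_some _ _ _ k); [lia | apply/eqP]. Qed.

Lemma bp_rel_lst_some w a q k : 1 <= k < q -> letter w k = Some a ->
  exists k0, bp_rel (BLst a) w q = Some k0.
Proof. by move=> rng_k wk; apply: (@omax_filter_iota_some _ _ _ k); [lia | apply/eqP]. Qed.

Lemma bp_rel_fst_min w a q k t :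
  bp_rel (BFst a) w q = Some k -> q < t -> letter w t = Some a -> k <= t.
Proof.
case/bp_rel_fst_spec=> _ _ mink qt wt; rewrite leqNgt; apply/negP => tk.
by apply: (mink t) => //; lia.
Qed.

Lemma bp_rel_lst_max w a q k t :
  bp_rel (BLst a) w q = Some k -> t < q -> letter w t = Some a -> t <= k.
Proof.
case/bp_rel_lst_spec=> _ _ maxk tq wt; rewrite leqNgt; apply/negP => kt.
by apply: (maxk t) => //; lia.
Qed.

(* The position from which the last step of the ranker [rcons s b] is taken;
   the virtual positions 0 and |w|+1 make the first step a relative one. *)
Definition anchor b w s : option nat :=
  if s is [::] then Some (if b is BFst _ then 0 else (size w).+1) else rk_eval w s.

Lemma rk_from_rcons w q r b :
  rk_from w q (rcons r b) = obind (bp_rel b w) (rk_from w q r).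
Proof. by elim: r q => [|b0 r IH] q /=; [case: bp_rel | case: bp_rel]. Qed.

Lemma rk_eval_rcons w s b : rk_eval w (rcons s b) = obind (bp_rel b w) (anchor b w s).
Proof.
case: s => [|b0 s] /=; last by case: bp_abs => //= q; rewrite rk_from_rcons.
by case: b => a /=; [rewrite subn0; case: omin | case: omax].
Qed.

Lemma anchor_nonnil b w s : s <> [::] -> anchor b w s = rk_eval w s.
Proof. by case: s. Qed.

Lemma rk_eval_range w r q : rk_eval w r = Some q -> 1 <= q <= size w.
Proof.
case/lastP: r => [//|s b]; rewrite rk_eval_rcons; case: anchor => //= a.
by case/bp_rel_range.
Qed.

Lemma rk_eval_letter u v r q q' :
  rk_eval u r = Some q -> rk_eval v r = Some q' -> letter u q = letter v q'.
Proof.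
case/lastP: r => [//|s b]; rewrite !rk_eval_rcons.
case: (anchor b u s) => //= a; case/bp_rel_range => _ ->.
by case: (anchor b v s) => //= a'; case/bp_rel_range => _ ->.
Qed.

End Rankers.

(** * Two-pebble games and Hintikka formulas *)

Section Games.
Variable Sigma : finType.
Implicit Types (u v w : seq Sigma) (f g : fo2 Sigma).

Definition atom_equiv u x y v x' y' :=
  [/\ letter u x = letter v x', letter u y = letter v y' & ord x y = ord x' y'].

Definition zigzag (nu nv : nat) (R : nat -> nat -> Prop) :=
  (forall z, 1 <= z <= nu -> exists2 z', 1 <= z' <= nv & R z z') /\
  (forall z', 1 <= z' <= nv -> exists2 z, 1 <= z <= nu & R z z').

Lemma zigzag_impl nu nv (R S : nat -> nat -> Prop) :
  (forall z z', R z z' -> S z z') -> zigzag nu nv R -> zigzag nu nv S.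
Proof.
move=> RS [fwd bwd]; split=> [z /fwd | z' /bwd] [t rng_t Rt]; exists t => //; exact: RS.
Qed.

Lemma zigzag_flip nu nv (R : nat -> nat -> Prop) :
  zigzag nu nv R -> zigzag nv nu (fun z' z => R z z').
Proof. by case. Qed.

Fixpoint ef_equiv m u x y v x' y' : Prop :=
  atom_equiv u x y v x' y' /\
  if m is m'.+1 then
    zigzag (size u) (size v) (fun z z' => ef_equiv m' u z y v z' y') /\
    zigzag (size u) (size v) (fun z z' => ef_equiv m' u x z v x' z')
  else True.

Lemma ef_equiv_atom m u x y v x' y' : ef_equiv m u x y v x' y' -> atom_equiv u x y v x' y'.
Proof. by case: m => [|m] []. Qed.

Lemma ef_equiv0 u x y v x' y' : ef_equiv 0 u x y v x' y' <-> atom_equiv u x y v x' y'.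
Proof. by split=> [[]|]. Qed.

Lemma ef_equiv_sym m u x y v x' y' : ef_equiv m u x y v x' y' -> ef_equiv m v x' y' u x y.
Proof.
elim: m x y x' y' => [|m IH] x y x' y' [[ex ey exy] G]; split=> //.
case: G => [/zigzag_flip Gx /zigzag_flip Gy].
by split; [move: Gx | move: Gy]; apply: zigzag_impl => z z'; apply: IH.
Qed.

Lemma ef_equiv_swap m u x y v x' y' : ef_equiv m u x y v x' y' -> ef_equiv m u y x v y' x'.
Proof.
elim: m x y x' y' => [|m IH] x y x' y' [[ex ey exy] G];
  split; try by split=> //; apply: eq_ord_sym.
by case: G => Gx Gy; split; [move: Gy | move: Gx]; apply: zigzag_impl => z z'; apply: IH.
Qed.

Lemma ef_equivSn m u x y v x' y' : ef_equiv m.+1 u x y v x' y' -> ef_equiv m u x y v x' y'.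
Proof.
elim: m x y x' y' => [|m IH] x y x' y' [A G]; split=> //.
by case: G => Gx Gy; split; [move: Gx | move: Gy]; apply: zigzag_impl => z z'; apply: IH.
Qed.

Lemma ef_equiv_refl m w x y : ef_equiv m w x y w x y.
Proof.
elim: m x y => [|m IH] x y; split=> //.
by split; split=> z rng_z; exists z.
Qed.

Lemma ord_val x y x' y' (z1 z2 : var) : ord x y = ord x' y' ->
  ord (Defs.val x y z1) (Defs.val x y z2) = ord (Defs.val x' y' z1) (Defs.val x' y' z2).
Proof. by move=> E; case: z1; case: z2; rewrite /= ?ord_refl //; apply: eq_ord_sym. Qed.

Lemma ef_equiv_sat f : forall m u x y v x' y', ef_equiv m u x y v x' y' ->
  qdepth f <= m -> (sat u x y f <-> sat v x' y' f).
Proof.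
elim: f => [a z|z1 z2|z1 z2| | |g IH|g IHg h IHh|g IHg h IHh|g IHg h IHh|z g IH|z g IH]
  m u v x y x' y' G /=.
- by case: (ef_equiv_atom G) => ex ey _ _; case: z => /=; rewrite ?ex ?ey.
- case: (ef_equiv_atom G) => _ _ /(ord_val z1 z2)/eq_ord_eq E _.
  by split=> /eqP; [rewrite E | rewrite -E] => /eqP.
- case: (ef_equiv_atom G) => _ _ /(ord_val z1 z2)/eq_ord_ltn E _.
  by rewrite E.
- by [].
- by [].
- by move=> dg; rewrite (IH _ _ _ _ _ _ _ G).
- by rewrite geq_max => /andP [dg dh]; rewrite (IHg _ _ _ _ _ _ _ G) // (IHh _ _ _ _ _ _ _ G).
- by rewrite geq_max => /andP [dg dh]; rewrite (IHg _ _ _ _ _ _ _ G) // (IHh _ _ _ _ _ _ _ G).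
- by rewrite geq_max => /andP [dg dh]; rewrite (IHg _ _ _ _ _ _ _ G) // (IHh _ _ _ _ _ _ _ G).
- case: m G => [|m] //= [_ [[fx bx] [fy by_]]] dg.
  case: z => /=; split.
  + by case=> k [rng_k sk]; case: (fx k rng_k) => k' rng_k' /IH Gk; exists k'; rewrite -Gk.
  + by case=> k' [rng_k' sk]; case: (bx k' rng_k') => k rng_k /IH Gk; exists k; rewrite Gk.
  + by case=> k [rng_k sk]; case: (fy k rng_k) => k' rng_k' /IH Gk; exists k'; rewrite -Gk.
  + by case=> k' [rng_k' sk]; case: (by_ k' rng_k') => k rng_k /IH Gk; exists k; rewrite Gk.
- case: m G => [|m] //= [_ [[fx bx] [fy by_]]] dg.
  case: z => /=; split.
  + by move=> sg k' rng_k'; case: (bx k' rng_k') => k rng_k /IH Gk; rewrite -Gk //; apply: sg.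
  + by move=> sg k rng_k; case: (fx k rng_k) => k' rng_k' /IH Gk; rewrite Gk //; apply: sg.
  + by move=> sg k' rng_k'; case: (by_ k' rng_k') => k rng_k /IH Gk; rewrite -Gk //; apply: sg.
  + by move=> sg k rng_k; case: (fy k rng_k) => k' rng_k' /IH Gk; rewrite Gk //; apply: sg.
Qed.

Definition bigAnd (fs : seq (fo2 Sigma)) := foldr (@FAnd Sigma) (FTrue Sigma) fs.
Definition bigOr (fs : seq (fo2 Sigma)) := foldr (@FOr Sigma) (FFalse Sigma) fs.

Lemma sat_bigAnd (T : eqType) (F : T -> fo2 Sigma) s w i j :
  sat w i j (bigAnd (map F s)) <-> forall k, k \in s -> sat w i j (F k).
Proof.
elim: s => [|a s IH] /=; first by [].
split=> [[Fa /IH Fs] k | Fs]; first by rewrite in_cons => /predU1P [->|/Fs].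
by split; [apply: Fs; rewrite mem_head | apply/IH => k sk; apply: Fs; rewrite in_cons sk orbT].
Qed.

Lemma sat_bigOr (T : eqType) (F : T -> fo2 Sigma) s w i j :
  sat w i j (bigOr (map F s)) <-> exists2 k, k \in s & sat w i j (F k).
Proof.
elim: s => [|a s IH] /=; first by split=> // [[]].
split=> [[Fa | /IH [k sk Fk]] | [k]]; first by exists a; rewrite ?mem_head.
  by exists k; rewrite // in_cons sk orbT.
by rewrite in_cons => /predU1P [-> | sk Fk]; [left | right; apply/IH; exists k].
Qed.

Lemma qdepth_bigAnd (fs : seq (fo2 Sigma)) m :
  all (fun f => qdepth f <= m) fs -> qdepth (bigAnd fs) <= m.
Proof. by elim: fs => //= f fs IH /andP [df dfs]; rewrite geq_max df IH. Qed.

Lemma qdepth_bigOr (fs : seq (fo2 Sigma)) m :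
  all (fun f => qdepth f <= m) fs -> qdepth (bigOr fs) <= m.
Proof. by elim: fs => //= f fs IH /andP [df dfs]; rewrite geq_max df IH. Qed.

Definition letter_formula (o : option Sigma) (z : var) :=
  bigAnd [seq if o == Some a then FQ a z else FNot (FQ a z) | a <- enum Sigma].

Definition ord_formula (c : comparison) :=
  match c with
  | Lt => FLt Sigma VX VY
  | Eq => FEq Sigma VX VY
  | Gt => FLt Sigma VY VX
  end.

Definition atom_formula w i j :=
  FAnd (letter_formula (letter w i) VX)
    (FAnd (letter_formula (letter w j) VY) (ord_formula (ord i j))).

Lemma sat_letter_formula w i j o z :
  sat w i j (letter_formula o z) <-> letter w (Defs.val i j z) = o.
Proof.
rewrite sat_bigAnd; split=> [lits | <- a _]; last by case: eqP => //= ->.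
case Eo: o => [a|]; first by have := lits a (mem_enum _ a); rewrite Eo eqxx.
case Ew: letter => [b|] //; have := lits b (mem_enum _ b).
by rewrite Eo /= => /(_ Ew).
Qed.

Lemma sat_ord_formula w i j c : sat w i j (ord_formula c) <-> ord i j = c.
Proof. by rewrite ordE; case: c => /=; case: ltngtP => ij; split=> // E; lia. Qed.

Lemma sat_atom_formula u i j v i' j' :
  sat v i' j' (atom_formula u i j) <-> atom_equiv u i j v i' j'.
Proof.
rewrite /= !sat_letter_formula sat_ord_formula /=.
by split=> [[ex [ey exy]] | [ex ey exy]].
Qed.

Lemma qdepth_letter_formula o z : qdepth (letter_formula o z) = 0.
Proof.
apply/eqP; rewrite -leqn0; apply: qdepth_bigAnd.
by rewrite all_map; apply/allP => a _ /=; case: eqP.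
Qed.

Lemma qdepth_ord_formula c : qdepth (ord_formula c) = 0.
Proof. by case: c. Qed.

Definition zigzag_formula w (z : var) (F : nat -> fo2 Sigma) :=
  FAnd (bigAnd [seq FEx z (F k) | k <- iota 1 (size w)])
    (FAll z (bigOr (map F (iota 1 (size w))))).

Lemma sat_zigzag_formula u v z i' j' (F : nat -> fo2 Sigma) :
  sat v i' j' (zigzag_formula u z F) <->
  zigzag (size u) (size v) (fun k k' =>
    sat v (if z is VX then k' else i') (if z is VX then j' else k') (F k)).
Proof.
have rngE k : (k \in iota 1 (size u)) = (1 <= k <= size u) by rewrite mem_iota; lia.
rewrite /= sat_bigAnd; case: z => /=; split=> [[fwd bwd] | [fwd bwd]]; split.
1,5: by move=> k; rewrite -rngE => /fwd [k' []]; exists k'.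
1,4: by move=> k' /bwd /(@sat_bigOr nat) [k]; rewrite rngE; exists k.
1,3: by move=> k; rewrite rngE => /fwd [k']; exists k'.
all: by move=> k' /bwd [k rng_k sk]; apply/(@sat_bigOr nat); exists k; rewrite ?rngE.
Qed.

Fixpoint hintikka m w i j :=
  if m is m'.+1 then
    FAnd (atom_formula w i j)
      (FAnd (zigzag_formula w VX (fun k => hintikka m' w k j))
            (zigzag_formula w VY (fun k => hintikka m' w i k)))
  else atom_formula w i j.

Lemma qdepth_hintikka m w i j : qdepth (hintikka m w i j) <= m.
Proof.
elim: m i j => [|m IH] i j; rewrite /= /atom_formula /zigzag_formula /=
  !qdepth_letter_formula qdepth_ord_formula // !max0n !geq_max !ltnS -!andbA.
by apply/and4P; split; [apply: qdepth_bigAnd | apply: qdepth_bigOr | apply: qdepth_bigAnd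
  | apply: qdepth_bigOr]; rewrite all_map; apply/allP => k _ /=; rewrite ?ltnS IH.
Qed.

Lemma sat_hintikka m u i j v i' j' :
  sat v i' j' (hintikka m u i j) <-> ef_equiv m u i j v i' j'.
Proof.
elim: m i j i' j' => [|m IH] i j i' j'; first by rewrite sat_atom_formula ef_equiv0.
split=> [[/sat_atom_formula A [/sat_zigzag_formula Zx /sat_zigzag_formula Zy]]
        | [A [Zx Zy]]].
  by split=> //; split; [move: Zx | move: Zy]; apply: zigzag_impl => k k' /IH.
split; first exact/sat_atom_formula.
by split; apply/sat_zigzag_formula; [move: Zx | move: Zy]; apply: zigzag_impl => k k' /IH.
Qed.

Lemma fo2equiv_ef n u i j v i' j' : fo2equiv n u i j v i' j' <-> ef_equiv n u i j v i' j'.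
Proof.
split=> [equiv | G f df]; last exact: ef_equiv_sat G df.
by apply/sat_hintikka/(equiv _ (qdepth_hintikka n u i j))/sat_hintikka/ef_equiv_refl.
Qed.

End Games.

(** * Rankers under the game *)

Section Tracking.
Variable Sigma : finType.
Implicit Types (u v w : seq Sigma) (b : bpos Sigma) (r s : seq (bpos Sigma)).

(* The possibly undefined positions [a] and [a'] are not separated by m-round
   games: both are defined or both are not, and pebbles related by the game lie
   on the same side of them. *)
Definition ef_tracks m u v (a a' : option nat) :=
  forall x z x' z', 1 <= z <= size u -> 1 <= z' <= size v ->
    ef_equiv m u x z v x' z' -> oord (Some z) a = oord (Some z') a'.

Lemma ef_tracks_sym m u v a a' : ef_tracks m u v a a' -> ef_tracks m v u a' a.
Proof. by move=> T x z x' z' rng_z rng_z' /ef_equiv_sym /T ->. Qed.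

Lemma ef_tracks_ord m u v a a' t z t' z' :
  ef_tracks m u v (Some a) (Some a') -> 1 <= t <= size u -> 1 <= t' <= size v ->
  ef_equiv m u t z v t' z' -> ord t a = ord t' a'.
Proof. by move=> T rng_t rng_t' /ef_equiv_swap /(T _ _ _ _ rng_t rng_t') []. Qed.

Lemma ef_tracks_isSome m u v a a' x y x' y' :
  ef_tracks m u v a a' -> 1 <= y <= size u -> 1 <= y' <= size v ->
  ef_equiv m u x y v x' y' -> isSome a = isSome a'.
Proof. by move=> T rng_y rng_y' /(T _ _ _ _ rng_y rng_y'); case: a {T}; case: a'. Qed.

Lemma bp_rel_response m u v x z x' z' b a a' q :
  ef_equiv m.+1 u x z v x' z' -> ef_tracks m u v (Some a) (Some a') ->
  bp_rel b u a = Some q ->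
  exists2 t', [/\ 1 <= t' <= size v, letter v t' = Some (bpos_letter b) & ord q a = ord t' a']
            & ef_equiv m u q z v t' z'.
Proof.
move=> [_ [[fwd _] _]] T /bp_rel_range [rng_q wq].
have [t' rng_t' G] := fwd q rng_q; exists t' => //.
by split=> //; [case: (ef_equiv_atom G) => <- | apply: ef_tracks_ord T rng_q rng_t' G].
Qed.

Lemma bp_rel_ef_some m u v x z x' z' b a a' q :
  ef_equiv m.+1 u x z v x' z' -> ef_tracks m u v (Some a) (Some a') ->
  bp_rel b u a = Some q -> exists q', bp_rel b v a' = Some q'.
Proof.
move=> G T Eq; have [t' [rng_t' wt' at'] _] := bp_rel_response G T Eq.
case: b Eq wt' => c Eq wt'.
- case/bp_rel_fst_spec: Eq => aq _ _.
  have a't' : a' < t' by rewrite -(eq_ord_gtn at').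
  by apply: (bp_rel_fst_some (k := t')) wt'; lia.
- case/bp_rel_lst_spec: Eq => qa _ _.
  have t'a' : t' < a' by rewrite -(eq_ord_ltn at').
  by apply: (bp_rel_lst_some (k := t')) wt'; lia.
Qed.

(* Spoiler pebbles [q]; the answer has the letter of [b] and lies on the same
   side of [a'], hence [q'] is no further from [a'] than it, and symmetrically. *)
Lemma ord_bp_rel_ef m u v x z x' z' b a a' p p' q q' :
  ef_equiv m.+1 u x z v x' z' -> ef_tracks m u v (Some a) (Some a') ->
  (forall t t', 1 <= t <= size u -> 1 <= t' <= size v ->
     ef_equiv m u t z v t' z' -> ord t p = ord t' p') ->
  bp_rel b u a = Some q -> bp_rel b v a' = Some q' -> ord q p = ord q' p'.
Proof.
move=> G T P Eq Eq'.
have [t' [rng_t' wt' at'] Gt'] := bp_rel_response G T Eq.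
have [t [rng_t wt at_] Gt] := bp_rel_response (ef_equiv_sym G) (ef_tracks_sym T) Eq'.
have [rng_q _] := bp_rel_range Eq; have [rng_q' _] := bp_rel_range Eq'.
have pt' := P q t' rng_q rng_t' Gt'; have pt := esym (P t q' rng_t rng_q' (ef_equiv_sym Gt)).
case: b Eq Eq' wt' wt => c Eq Eq' wt' wt.
- have [aq _ _] := bp_rel_fst_spec Eq; have [aq' _ _] := bp_rel_fst_spec Eq'.
  apply: ord_squeeze pt' pt.
    by apply: bp_rel_fst_min Eq' _ wt'; rewrite -(eq_ord_gtn at') aq.
  by apply: bp_rel_fst_min Eq _ wt; rewrite -(eq_ord_gtn at_) aq'.
- have [qa _ _] := bp_rel_lst_spec Eq; have [qa' _ _] := bp_rel_lst_spec Eq'.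
  apply: ord_squeeze_rev pt' pt.
    by apply: bp_rel_lst_max Eq' _ wt'; rewrite -(eq_ord_ltn at') qa.
  by apply: bp_rel_lst_max Eq _ wt; rewrite -(eq_ord_ltn at_) qa'.
Qed.

Lemma ef_tracks_step m u v b a a' : ef_tracks m u v a a' ->
  ef_tracks m.+1 u v (obind (bp_rel b u) a) (obind (bp_rel b v) a').
Proof.
move=> T x z x' z' rng_z rng_z' G.
have := T x z x' z' rng_z rng_z' (ef_equivSn G).
case: a T => [a|] T; case: a' T => [a'|] T //= _.
case Eq: (bp_rel b u a) => [q|]; case Eq': (bp_rel b v a') => [q'|] //=.
- congr Some; apply/eq_ord_sym/(ord_bp_rel_ef G T _ Eq Eq') => t t' _ _.
  by case/ef_equiv_atom.
- by have [q' ] := bp_rel_ef_some G T Eq; rewrite Eq'.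
- by have [q ] := bp_rel_ef_some (ef_equiv_sym G) (ef_tracks_sym T) Eq'; rewrite Eq.
Qed.

Lemma ef_tracks_anchor_nil m u v b : ef_tracks m u v (anchor b u [::]) (anchor b v [::]).
Proof.
case: b => c x z x' z' rng_z rng_z' _; rewrite /anchor !oord_some !ordE.
  by case: (ltngtP z 0); case: (ltngtP z' 0) => //; lia.
by case: (ltngtP z (size u).+1); case: (ltngtP z' (size v).+1) => //; lia.
Qed.

Lemma ranker_tracks m u v r : 1 <= size r <= m -> ef_tracks m u v (rk_eval u r) (rk_eval v r).
Proof.
elim: m r => [|m IH] r sz_r; first lia.
case/lastP: r sz_r => [//|s b]; rewrite size_rcons => sz_r; rewrite !rk_eval_rcons.
apply: ef_tracks_step; case: s sz_r => [|b0 s] sz_r; first exact: ef_tracks_anchor_nil.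
exact: IH.
Qed.

Lemma ef_tracks_anchor m u v b s :
  size s <= m -> ef_tracks m u v (anchor b u s) (anchor b v s).
Proof.
case: s => [|b0 s] sz_s; first exact: ef_tracks_anchor_nil.
exact: ranker_tracks.
Qed.

Lemma ef_equiv_ranker_order n u v x y x' y' r r' :
  ef_equiv n u x y v x' y' -> 1 <= y <= size u -> 1 <= y' <= size v ->
  1 <= size r <= n -> 1 <= size r' <= n.-1 ->
  oord (rk_eval u r) (rk_eval u r') = oord (rk_eval v r) (rk_eval v r').
Proof.
case: n => [|m] G rng_y rng_y' sz_r sz_r'; first lia.
have Gm := ef_equivSn G.
have T' : ef_tracks m u v (rk_eval u r') (rk_eval v r') := ranker_tracks sz_r'.
have D' := ef_tracks_isSome T' rng_y rng_y' Gm.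
case/lastP: r sz_r => [//|s b]; rewrite size_rcons => sz_r.
have Ta := @ef_tracks_anchor m u v b s (ltac:(lia)).
have Da := ef_tracks_isSome Ta rng_y rng_y' Gm.
rewrite !rk_eval_rcons.
case: (rk_eval u r') (rk_eval v r') T' D' => [p|] [p'|] T' //= _; last first.
  by case: obind; case: obind.
case: (anchor b u s) (anchor b v s) Ta Da => [a|] [a'|] Ta //= _.
case Eq: (bp_rel b u a) => [q|]; case Eq': (bp_rel b v a') => [q'|] //=.
- congr Some; apply: (ord_bp_rel_ef G Ta _ Eq Eq') => t t' rng_t rng_t'.
  exact: ef_tracks_ord T' rng_t rng_t'.
- by have [?] := bp_rel_ef_some G Ta Eq; rewrite Eq'.
- by have [?] := bp_rel_ef_some (ef_equiv_sym G) (ef_tracks_sym Ta) Eq'; rewrite Eq.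
Qed.

End Tracking.

(** * Agreement on rankers, the Duplicator's invariant *)

Section Agreement.
Variable Sigma : finType.
Implicit Types (u v w : seq Sigma) (b : bpos Sigma) (r s : seq (bpos Sigma)).

(* Conditions (c), (b) and (d) of the theorem, (d) also covering rankers
   undefined in [u]: the invariant of the Duplicator's strategy. *)
Definition rankers_agree n u x y v x' y' :=
  [/\ atom_equiv u x y v x' y',
      forall r r', 1 <= size r <= n -> 1 <= size r' <= n.-1 ->
        oord (rk_eval u r) (rk_eval u r') = oord (rk_eval v r) (rk_eval v r'),
      forall r, 1 <= size r <= n ->
        oord (Some x) (rk_eval u r) = oord (Some x') (rk_eval v r)
    & forall r, 1 <= size r <= n ->
        oord (Some y) (rk_eval u r) = oord (Some y') (rk_eval v r)].

Lemma ef_rankers_agree n u v x y x' y' :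
  1 <= x <= size u -> 1 <= y <= size u -> 1 <= x' <= size v -> 1 <= y' <= size v ->
  ef_equiv n u x y v x' y' -> rankers_agree n u x y v x' y'.
Proof.
move=> rng_x rng_y rng_x' rng_y' G; split; first exact: ef_equiv_atom G.
- by move=> r r'; apply: ef_equiv_ranker_order G rng_y rng_y'.
- by move=> r /ranker_tracks T; apply: T rng_x rng_x' (ef_equiv_swap G).
- by move=> r /ranker_tracks T; apply: T rng_y rng_y' G.
Qed.

Lemma rankers_agree_sym n u v x y x' y' :
  rankers_agree n u x y v x' y' -> rankers_agree n v x' y' u x y.
Proof.
case=> [[ex ey exy] Ob Ox Oy]; split; first by split.
- by move=> r r' ? ?; rewrite Ob.
- by move=> r ?; rewrite Ox.
- by move=> r ?; rewrite Oy.
Qed.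

Lemma rankers_agree_swap n u v x y x' y' :
  rankers_agree n u x y v x' y' -> rankers_agree n u y x v y' x'.
Proof. by case=> [[ex ey exy] Ob Ox Oy]; split=> //; split=> //; apply: eq_ord_sym. Qed.

Lemma rankers_agree_response_at n u v x y x' y' z r q :
  rankers_agree n.+1 u x y v x' y' -> 1 <= size r <= n.+1 -> rk_eval u r = Some q ->
  letter u q = letter u z -> ord x z = ord x q ->
  (forall r' p, 1 <= size r' <= n -> rk_eval u r' = Some p -> ord z p = ord q p) ->
  exists2 z', 1 <= z' <= size v & rankers_agree n u x z v x' z'.
Proof.
move=> [[ex _ _] Ob Ox _] sz_r Eq wq xz sim.
have := Ox r sz_r; rewrite Eq; case Eq': (rk_eval v r) => [q'|] // [xq].
exists q'; first exact: rk_eval_range Eq'.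
split.
- by split=> //; [rewrite -wq (rk_eval_letter Eq Eq') | rewrite xz].
- by move=> r1 r2 ? ?; apply: Ob; lia.
- by move=> r1 ?; apply: Ox; lia.
move=> r1 sz_r1; have := Ox r1 (ltac:(lia)).
case Ep: (rk_eval u r1) => [p|]; case Ep': (rk_eval v r1) => [p'|] // _.
have := Ob r r1 sz_r (ltac:(lia)); rewrite Eq Eq' Ep Ep' => -[qp].
by rewrite !oord_some (sim r1 p sz_r1 Ep); congr Some.
Qed.

(* Values of rankers of length at most [n], and the anchors of length-1 rankers. *)
Definition marker n u p :=
  [\/ p = 0, p = (size u).+1 | exists2 r, 1 <= size r <= n & rk_eval u r = Some p].

Lemma marker_step n u b p q : marker n u p -> bp_rel b u p = Some q ->
  exists2 r, 1 <= size r <= n.+1 & rk_eval u r = Some q.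
Proof.
have single b' : rk_eval u [:: b'] = obind (bp_rel b' u) (anchor b' u [::]).
  by rewrite -rk_eval_rcons.
case=> [-> | -> | [r sz_r Ep]] Eq.
- case: b Eq => c Eq; last by case/bp_rel_lst_spec: Eq.
  by exists [:: BFst c]; rewrite ?single.
- case: b Eq => c Eq; first by have [? _ _] := bp_rel_fst_spec Eq; case: (bp_rel_range Eq); lia.
  by exists [:: BLst c]; rewrite ?single.
- exists (rcons r b); first by rewrite size_rcons; lia.
  by rewrite rk_eval_rcons anchor_nonnil ?Ep //; case: r sz_r {Ep}.
Qed.

Lemma exists_twin_ranker n u x z : 1 <= z <= size u -> z != x ->
  exists r q, [/\ 1 <= size r <= n.+1, rk_eval u r = Some q, letter u q = letter u z,
    ord x z = ord x q
  & forall r' p, 1 <= size r' <= n -> rk_eval u r' = Some p -> ord z p = ord q p].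
Proof.
move=> rng_z /eqP zx.
case: (classic (marker n u z)) => [[||[r sz_r Ez]] | nMz]; try lia.
  by exists r, z; split=> //; lia.
pose M p := p = x \/ marker n u p.
have [L [Lz ML maxL]] := @exists_greatest_below M 0 z (leq0n z) (or_intror (Or31 _ _ erefl)).
have [R [zR MR minR]] :=
  @exists_least_above M (size u).+1 z (ltac:(lia)) (or_intror (Or32 _ _ erefl)).
have notMz : ~ M z by case.
have Lz' : L < z by rewrite ltn_neqAle Lz andbT; apply: contra_not_neq notMz => <-.
have zR' : z < R by rewrite ltn_neqAle zR andbT; apply: contra_not_neq notMz => ->.
have gap p : M p -> (p <= L) || (R <= p).
  move=> Mp; apply/negPn/negP; rewrite negb_or -!ltnNge => /andP [Lp pR].
  by case: (leqP p z) => pz; [apply: (maxL p _ Mp) | apply: (minR p _ Mp)]; lia.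
have [c wz] := letter_exists rng_z.
have [q [Lq qR wq [r sz_r Eq]]] : exists q, [/\ L < q, q < R, letter u q = Some c
    & exists2 r, 1 <= size r <= n.+1 & rk_eval u r = Some q].
  case: (classic (marker n u L)) => [mL | nmL].
    have [q Eq] := @bp_rel_fst_some _ u c L z (ltac:(lia)) wz.
    have [Lq wq _] := bp_rel_fst_spec Eq; have qz := bp_rel_fst_min Eq Lz' wz.
    by exists q; split=> //; [lia | apply: marker_step mL Eq].
  have mR : marker n u R by case: MR => // Rx; case: ML => // Lx; lia.
  have [q Eq] := @bp_rel_lst_some _ u c R z (ltac:(lia)) wz.
  have [qR wq _] := bp_rel_lst_spec Eq; have zq := bp_rel_lst_max Eq zR' wz.
  by exists q; split=> //; [lia | apply: marker_step mR Eq].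
have same_side p : M p -> ord z p = ord q p by move/gap; apply: ord_in_gap; lia.
exists r, q; split=> //; first by rewrite wq wz.
  by apply: eq_ord_sym; apply: same_side; left.
by move=> r' p sz_r' Ep; apply: same_side; right; apply: Or33; exists r'.
Qed.

Lemma rankers_agree_response n u v x y x' y' z :
  rankers_agree n.+1 u x y v x' y' -> 1 <= x' <= size v -> 1 <= z <= size u ->
  exists2 z', 1 <= z' <= size v & rankers_agree n u x z v x' z'.
Proof.
move=> RA rng_x' rng_z; have [-> | zx] := eqVneq z x.
  case: RA => [[ex _ _] Ob Ox _]; exists x' => //.
  split; first by split; rewrite ?ord_refl.
  - by move=> r r' ? ?; apply: Ob; lia.
  - by move=> r ?; apply: Ox; lia.
  - by move=> r ?; apply: Ox; lia.
have [r [q [sz_r Eq wq xz sim]]] := exists_twin_ranker n rng_z zx.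
exact: rankers_agree_response_at RA sz_r Eq wq xz sim.
Qed.

Lemma rankers_agree_ef n u v x y x' y' :
  1 <= x <= size u -> 1 <= y <= size u -> 1 <= x' <= size v -> 1 <= y' <= size v ->
  rankers_agree n u x y v x' y' -> ef_equiv n u x y v x' y'.
Proof.
elim: n x y x' y' => [|n IH] x y x' y' rng_x rng_y rng_x' rng_y' RA; first by case: RA.
have RAy := rankers_agree_swap RA; have RAv := rankers_agree_sym RA.
have RAvy := rankers_agree_sym RAy.
split; first by case: RA.
split; split.
- move=> z rng_z; have [z' rng_z' RA'] := rankers_agree_response RAy rng_y' rng_z.
  by exists z' => //; apply: IH => //; apply: rankers_agree_swap.
- move=> z' rng_z'; have [z rng_z RA'] := rankers_agree_response RAvy rng_y rng_z'.
  by exists z => //; apply: IH => //; apply/rankers_agree_swap/rankers_agree_sym.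
- move=> z rng_z; have [z' rng_z' RA'] := rankers_agree_response RA rng_x' rng_z.
  by exists z' => //; apply: IH.
- move=> z' rng_z'; have [z rng_z RA'] := rankers_agree_response RAv rng_x rng_z'.
  by exists z => //; apply: IH => //; apply: rankers_agree_sym.
Qed.

End Agreement.

Section Extension.
Variable Sigma : finType.
Implicit Types (u v w : seq Sigma) (b : bpos Sigma) (r s t : seq (bpos Sigma)).

Lemma rk_eval_prefix w r t : r <> [::] -> rk_eval w (r ++ t) <> None -> rk_eval w r <> None.
Proof.
move=> r_nil; elim/last_ind: t => [|t b IH]; first by rewrite cats0.
rewrite -rcons_cat rk_eval_rcons anchor_nonnil; last by case: r r_nil {IH}.
by move=> def; apply: IH => E; rewrite E in def.
Qed.

Lemma rk_eval_extend1 w r q : 2 <= size w -> rk_eval w r = Some q ->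
  exists b q1, rk_eval w (rcons r b) = Some q1.
Proof.
move=> w2 Eq; have rng_q := rk_eval_range Eq.
have anchor_r b : anchor b w r = Some q by case: r Eq {rng_q}.
case: (ltnP q (size w)) => q_lt.
- have [c wc] := @letter_exists _ w q.+1 (ltac:(lia)).
  have [q1 E1] := @bp_rel_fst_some _ w c q q.+1 (ltac:(lia)) wc.
  by exists (BFst c), q1; rewrite rk_eval_rcons anchor_r.
- have [c wc] := @letter_exists _ w q.-1 (ltac:(lia)).
  have [q1 E1] := @bp_rel_lst_some _ w c q q.-1 (ltac:(lia)) wc.
  by exists (BLst c), q1; rewrite rk_eval_rcons anchor_r.
Qed.

Lemma rk_eval_extend w r q k : 2 <= size w -> rk_eval w r = Some q ->
  exists2 t, size t = k & rk_eval w (r ++ t) <> None.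
Proof.
elim: k r q => [|k IH] r q w2 Eq; first by exists [::]; rewrite ?cats0 ?Eq.
have [b [q1 E1]] := rk_eval_extend1 w2 Eq.
have [t sz_t Et] := IH _ _ w2 E1.
by exists (b :: t); [rewrite /= sz_t | rewrite -cat_rcons].
Qed.

(* In a word of length at least 2 a defined ranker extends to length [n]; in a
   one-letter word only rankers of length 1 are defined, reading the letter at [j]. *)
Lemma Rn_eq_defined n u v i j r : (forall r, inR n u r <-> inR n v r) ->
  1 <= i <= size u -> 1 <= j <= size v -> letter u i = letter v j ->
  1 <= size r <= n -> rk_eval v r <> None -> rk_eval u r <> None.
Proof.
move=> Rn rng_i rng_j wij sz_r; case Ev: (rk_eval v r) => [q|] // _.
have [v2 | v1] := leqP 2 (size v).
  have [t sz_t def_v] := rk_eval_extend (n - size r) v2 Ev.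
  have /Rn [_ [_ def_u]] : inR n v (r ++ t).
    by split; [rewrite size_cat sz_t; lia | split; [lia | done]].
  by apply: rk_eval_prefix def_u; case: (r) sz_r.
case/lastP: r sz_r Ev => [//|s b] _; rewrite !rk_eval_rcons.
case: s => [|b0 s] Ev; last first.
  case Ea: (anchor b v (b0 :: s)) Ev => [a|] //= Eq.
  have rng_a := rk_eval_range Ea; have [rng_q _] := bp_rel_range Eq.
  by case: b {Ea} Eq => c; [case/bp_rel_fst_spec | case/bp_rel_lst_spec]; lia.
have [rng_q wq] := bp_rel_range Ev; have qj : q = j by lia.
rewrite qj -wij in wq; case: b {Ev} wq => c wi.
- have [k Ek] := @bp_rel_fst_some _ u c 0 i (ltac:(lia)) wi.
  by change (bp_rel (BFst c) u 0 <> None); rewrite Ek.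
- have [k Ek] := @bp_rel_lst_some _ u c (size u).+1 i (ltac:(lia)) wi.
  by change (bp_rel (BLst c) u (size u).+1 <> None); rewrite Ek.
Qed.

End Extension.

Section Conditions.
Variable Sigma : finType.
Implicit Types (u v : seq Sigma) (r : seq (bpos Sigma)).

Definition ranker_conditions n u i1 i2 v j1 j2 :=
  (forall r, inR n u r <-> inR n v r)
  /\ (forall r r', inRstar n u r -> inRstar n.-1 u r' ->
        oord (rk_eval u r) (rk_eval u r') = oord (rk_eval v r) (rk_eval v r'))
  /\ fo2equiv 0 u i1 i2 v j1 j2
  /\ (forall r, inRstar n u r ->
        oord (Some i1) (rk_eval u r) = oord (Some j1) (rk_eval v r)
        /\ oord (Some i2) (rk_eval u r) = oord (Some j2) (rk_eval v r)).

Lemma rankers_agree_conditions n u i1 i2 v j1 j2 :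
  rankers_agree n u i1 i2 v j1 j2 -> ranker_conditions n u i1 i2 v j1 j2.
Proof.
case=> A Ob Ox Oy; split; [|split; [|split]].
- move=> r; rewrite /inR /rk_defined.
  by split=> -[sz_r [n_gt0 D]]; do !split=> //; move: D;
    have := Ox r (ltac:(lia)); case: rk_eval; case: rk_eval.
- by move=> r r' [sz_r _] [sz_r' _]; apply: Ob.
- by apply/fo2equiv_ef/ef_equiv0.
- by move=> r [sz_r _]; split; [apply: Ox | apply: Oy].
Qed.

Lemma conditions_rankers_agree n u i1 i2 v j1 j2 :
  1 <= i1 <= size u -> 1 <= j1 <= size v ->
  ranker_conditions n u i1 i2 v j1 j2 -> rankers_agree n u i1 i2 v j1 j2.
Proof.
move=> rng_i1 rng_j1 [Rn [Ob [/fo2equiv_ef/ef_equiv0 A Od]]].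
have [wi1 _ _] := A.
have undef r : 1 <= size r <= n -> rk_eval u r = None -> rk_eval v r = None.
  move=> sz_r Eu; case Ev: (rk_eval v r) => [q|] //; exfalso.
  by apply: (Rn_eq_defined Rn rng_i1 rng_j1 wi1 sz_r); rewrite ?Ev ?Eu.
have Od' r : 1 <= size r <= n ->
    oord (Some i1) (rk_eval u r) = oord (Some j1) (rk_eval v r)
    /\ oord (Some i2) (rk_eval u r) = oord (Some j2) (rk_eval v r).
  move=> sz_r; case Eu: (rk_eval u r) => [q|]; last by rewrite (undef r sz_r Eu).
  by rewrite -Eu; apply: Od; split=> //; rewrite /rk_defined Eu.
split=> //.
- move=> r r' sz_r sz_r'; have sz_r'n : 1 <= size r' <= n by lia.
  case Eu: (rk_eval u r) => [q|]; last by rewrite (undef r sz_r Eu).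
  case Eu': (rk_eval u r') => [p|]; last by rewrite (undef r' sz_r'n Eu'); case: rk_eval.
  by rewrite -Eu -Eu'; apply: Ob; split=> //; rewrite /rk_defined ?Eu ?Eu'.
- by move=> r /Od' [].
- by move=> r /Od' [].
Qed.

End Conditions.

Theorem theorem3p9 (Sigma : finType) (u v : seq Sigma)
  (i1 i2 j1 j2 n : nat)
  (Hi1 : 1 <= i1 <= size u) (Hi2 : 1 <= i2 <= size u)
  (Hj1 : 1 <= j1 <= size v) (Hj2 : 1 <= j2 <= size v) :
  ( (* (a) R_n(u) = R_n(v) *)
    (forall r : seq (bpos Sigma), inR n u r <-> inR n v r)
    (* (b) *)
    /\ (forall r r' : seq (bpos Sigma), inRstar n u r -> inRstar n.-1 u r' ->
          oord (rk_eval u r) (rk_eval u r') = oord (rk_eval v r) (rk_eval v r'))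
    (* (c) *)
    /\ fo2equiv 0 u i1 i2 v j1 j2
    (* (d) *)
    /\ (forall r : seq (bpos Sigma), inRstar n u r ->
          oord (Some i1) (rk_eval u r) = oord (Some j1) (rk_eval v r)
          /\ oord (Some i2) (rk_eval u r) = oord (Some j2) (rk_eval v r)) )
  <-> fo2equiv n u i1 i2 v j1 j2.
Proof.
split=> [conds | /fo2equiv_ef G].
- apply/fo2equiv_ef/rankers_agree_ef => //.
  exact: conditions_rankers_agree conds.
- exact/rankers_agree_conditions/ef_rankers_agree.
Qed.
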